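(* Let $\mathcal A^{\times}=\mathcal D_x\otimes\mathcal D_y-\mathcal G_x\otimes\mathcal G_y$ be the two-dimensional collocation matrix for the multiplicative kernel (see context). Then $\mathcal A^{\times}$ is strictly diagonally dominant by rows.
   Context: Fix $\gamma\in(0,1)$. For an interval $[\alpha,\beta]$ and an integer $m\ge2$ let $h=(\beta-\alpha)/m$, $x_s=\alpha+sh$ ($s\in\{0,\tfrac12,\dots,m\}$), and let $\phi_{s}$ be the piecewise quadratic Lagrange basis: for integers $0\le l\le m$, $\phi_l(x)=\frac{x-x_{l-1}}{h}\cdot\frac{2x-(x_l+x_{l-1})}{h}$ on $[x_{l-1},x_l]\cap[\alpha,\beta]$, $\phi_l(x)=\frac{x_{l+1}-x}{h}\cdot\frac{(x_{l+1}+x_l)-2x}{h}$ on $[x_l,x_{l+1}]\cap[\alpha,\beta]$, $0$ otherwise; for $l=1,\dots,m$, $\phi_{l-\frac12}(x)=\frac{4(x-x_{l-1})(x_l-x)}{h^2}$ on $[x_{l-1},x_l]$, $0$ otherwise. The associated 1D matrices are $\mathcal D=\mathrm{diag}(d_1,\dots,d_{2m-1})$ and $\mathcal G=(g_{ij})_{i,j=1}^{2m-1}$ with $d_i=\int_\alpha^\beta|x_{i/2}-y|^{-\gamma}dy$ and $g_{ij}=\int_\alpha^\beta\phi_{j/2}(y)|x_{i/2}-y|^{-\gamma}dy$. The following fact, established in earlier work, may be used: all $g_{ij}>0$ and $\mathcal D-\mathcal G$ is strictly diagonally dominant by rows. For $a<b$, $c<d$, $M_x,M_y\ge2$: $\mathcal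 D_x,\mathcal G_x$ are these matrices for $[a,b]$, $m=M_x$, and $\mathcal D_y,\mathcal G_y$ for $[c,d]$, $m=M_y$. Then $\mathcal A^{\times}=\mathcal D_x\otimes\mathcal D_y-\mathcal G_x\otimes\mathcal G_y$, which is the collocation matrix of $u\mapsto\int_\Omega\frac{u(x,y)-u(\bar x,\bar y)}{|x-\bar x|^\gamma|y-\bar y|^\gamma}d\bar xd\bar y$ on $\Omega=(a,b)\times(c,d)$ with tensor-product piecewise quadratic interpolation, rows/columns indexed by pairs $(i,j)\in\{1,\dots,2M_x-1\}\times\{1,\dots,2M_y-1\}$. *)

From Stdlib Require Import Reals Lra Arith.
Open Scope R_scope.

Fixpoint sumR (n : nat) (f : nat -> R) : R :=
  match n with
  | O => 0
  | S p => sumR p f + f (S p)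
  end.

(* Half-integer node x_{k/2} = alpha + k*h/2, h = (beta-alpha)/m. *)
Definition node (alpha beta : R) (m k : nat) : R :=
  alpha + INR k * ((beta - alpha) / INR m) / 2.

(* phi_l, l integer node (0 <= l <= m), piecewise quadratic Lagrange basis. *)
Definition phi_int (alpha beta : R) (m l : nat) (x : R) : R :=
  let h := (beta - alpha) / INR m in
  let xl := alpha + INR l * h in
  let xlm := xl - h in
  let xlp := xl + h in
  if Rle_dec alpha x then
    if Rle_dec x beta then
      if Rle_dec xlm x then
        if Rle_dec x xl then ((x - xlm) / h) * ((2 * x - (xl + xlm)) / h)
        else if Rle_dec x xlp then ((xlp - x) / h) * ((xlp + xl - 2 * x) / h)
        else 0
      else 0
    else 0
  else 0.

(* phi_{l-1/2}, 1 <= l <= m. *)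
Definition phi_mid (alpha beta : R) (m l : nat) (x : R) : R :=
  let h := (beta - alpha) / INR m in
  let xl := alpha + INR l * h in
  let xlm := xl - h in
  if Rle_dec xlm x then
    if Rle_dec x xl then 4 * (x - xlm) * (xl - x) / (h * h)
    else 0
  else 0.

(* phi_{j/2} for j = 1 .. 2m-1 *)
Definition phi (alpha beta : R) (m j : nat) (x : R) : R :=
  if Nat.even j then phi_int alpha beta m (Nat.div2 j) x
  else phi_mid alpha beta m (Nat.div2 (S j)) x.

Definition kern (gamma x y : R) : R := Rpower (Rabs (x - y)) (- gamma).

Definition RInt_is (f : R -> R) (a b v : R) : Prop :=
  exists pr : Riemann_integrable f a b, RiemannInt pr = v.

(* Improper (principal-value-free, symmetric-excision) integral of f over
   [a,b] with a possible singularity at c in [a,b]: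
   v = lim_{h->0+} ( int_a^{max(a,c-h)} f + int_{min(b,c+h)}^b f ). *)
Definition improper_int_at (f : R -> R) (a b c v : R) : Prop :=
  a <= c <= b /\
  forall eps, 0 < eps -> exists delta, 0 < delta /\
    forall h, 0 < h < delta ->
      exists v1 v2, RInt_is f a (Rmax a (c - h)) v1 /\
                    RInt_is f (Rmin b (c + h)) b v2 /\
                    Rabs (v1 + v2 - v) < eps.

(* d : nat -> R gives the diagonal of the 1D matrix D (indices 1..2m-1). *)
Definition is_Dvec (gamma alpha beta : R) (m : nat) (d : nat -> R) : Prop :=
  forall i, (1 <= i <= 2 * m - 1)%nat ->
    improper_int_at (fun y => kern gamma (node alpha beta m i) y)
      alpha beta (node alpha beta m i) (d i).

Definition is_Gmat (gamma alpha beta : R) (m : nat) (G : nat -> nat -> R) : Prop :=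
  forall i j, (1 <= i <= 2 * m - 1)%nat -> (1 <= j <= 2 * m - 1)%nat ->
    improper_int_at
      (fun y => phi alpha beta m j y * kern gamma (node alpha beta m i) y)
      alpha beta (node alpha beta m i) (G i j).

Definition diagm (d : nat -> R) : nat -> nat -> R :=
  fun i k => if Nat.eqb i k then d i else 0.

Definition sdd_rows (n : nat) (M : nat -> nat -> R) : Prop :=
  forall i, (1 <= i <= n)%nat ->
    sumR n (fun k => if Nat.eqb k i then 0 else Rabs (M i k)) < Rabs (M i i).

Definition kron (A B : nat -> nat -> R) : (nat * nat) -> (nat * nat) -> R :=
  fun p q => A (fst p) (fst q) * B (snd p) (snd q).

Definition sdd_rows2 (n1 n2 : nat) (M : (nat * nat) -> (nat * nat) -> R) : Prop :=
  forall i j, (1 <= i <= n1)%nat -> (1 <= j <= n2)%nat ->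
    sumR n1 (fun k => sumR n2 (fun l =>
      if andb (Nat.eqb k i) (Nat.eqb l j) then 0 else Rabs (M (i, j) (k, l))))
    < Rabs (M (i, j) (i, j)).

Definition Atimes (dx : nat -> R) (Gx : nat -> nat -> R)
                  (dy : nat -> R) (Gy : nat -> nat -> R) :=
  fun p q => kron (diagm dx) (diagm dy) p q - kron Gx Gy p q.

(* The 1D facts give, for each row i, 0 < G_ii <= sum_k G_ik < d_i: the
   sign condition G_ii <= d_i comes from comparing the two integrals, as
   phi_i <= 1, and then strict dominance of D - G says exactly that the
   full row sum of G is below d_i.  In the Kronecker matrix every
   off-diagonal entry of row (i,j) is -Gx_ik Gy_jl, so the off-diagonal row
   sum is Sx Sy - Gx_ii Gy_jj while the diagonal is dx_i dy_j - Gx_ii Gy_jj,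
   and Sx Sy < dx_i dy_j. *)
From Stdlib Require Import Reals Lra Lia Psatz.
Open Scope R_scope.

Lemma sumR_ext n f g : (forall k, (1 <= k <= n)%nat -> f k = g k) ->
  sumR n f = sumR n g.
Proof.
  induction n as [|n IH]; simpl; intros H; [reflexivity|].
  rewrite IH by (intros; apply H; lia). rewrite H by lia. reflexivity.
Qed.

Lemma sumR_sub n f g : sumR n (fun k => f k - g k) = sumR n f - sumR n g.
Proof. induction n as [|n IH]; simpl; [lra|]. rewrite IH; lra. Qed.

Lemma sumR_scal n c f : sumR n (fun k => c * f k) = c * sumR n f.
Proof. induction n as [|n IH]; simpl; [lra|]. rewrite IH; lra. Qed.

Lemma sumR_ge0 n f : (forall k, (1 <= k <= n)%nat -> 0 <= f k) -> 0 <= sumR n f.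
Proof.
  induction n as [|n IH]; simpl; intros H; [lra|].
  assert (0 <= sumR n f) by (apply IH; intros; apply H; lia).
  assert (0 <= f (S n)) by (apply H; lia). lra.
Qed.

Lemma sumR_delta n i c : (1 <= i <= n)%nat ->
  sumR n (fun k => if Nat.eqb k i then c else 0) = c.
Proof.
  induction n as [|n IH]; simpl; intros Hi; [lia|].
  change (match i with 0%nat => false | S p => Nat.eqb n p end) with (Nat.eqb (S n) i).
  destruct (Nat.eqb_spec (S n) i) as [<-|Hne].
  - rewrite (sumR_ext n _ (fun _ => 0)).
    + clear. induction n; simpl; lra.
    + intros k Hk. destruct (Nat.eqb_spec k (S n)); [lia|reflexivity].
  - rewrite IH by lia. lra.
Qed.

Lemma sumR_drop n i f : (1 <= i <= n)%nat ->
  sumR n (fun k => if Nat.eqb k i then 0 else f k) = sumR n f - f i.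
Proof.
  intros Hi. rewrite <- (sumR_delta n i (f i) Hi), <- sumR_sub.
  apply sumR_ext; intros k _. destruct (Nat.eqb_spec k i); subst; lra.
Qed.

Lemma sumR_ge_term n i f : (forall k, (1 <= k <= n)%nat -> 0 <= f k) ->
  (1 <= i <= n)%nat -> f i <= sumR n f.
Proof.
  intros Hf Hi.
  assert (0 <= sumR n (fun k => if Nat.eqb k i then 0 else f k)).
  { apply sumR_ge0; intros k Hk. destruct (Nat.eqb k i); [lra|auto]. }
  rewrite sumR_drop in H by exact Hi. lra.
Qed.

Lemma sumR_mul n1 n2 u v :
  sumR n1 (fun k => sumR n2 (fun l => u k * v l)) = sumR n1 u * sumR n2 v.
Proof.
  rewrite (sumR_ext n1 _ (fun k => sumR n2 v * u k)).
  - rewrite sumR_scal; ring.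
  - intros k _. rewrite sumR_scal; ring.
Qed.

Lemma sumR2_drop n1 n2 i j f : (1 <= i <= n1)%nat -> (1 <= j <= n2)%nat ->
  sumR n1 (fun k => sumR n2 (fun l =>
    if andb (Nat.eqb k i) (Nat.eqb l j) then 0 else f k l))
  = sumR n1 (fun k => sumR n2 (f k)) - f i j.
Proof.
  intros Hi Hj.
  rewrite (sumR_ext n1 _ (fun k => sumR n2 (f k)
            - (if Nat.eqb k i then f i j else 0))).
  - rewrite sumR_sub, sumR_delta by exact Hi. reflexivity.
  - intros k _. destruct (Nat.eqb_spec k i) as [->|Hne]; simpl.
    + exact (sumR_drop n2 j (f i) Hj).
    + rewrite Rminus_0_r. reflexivity.
Qed.

Lemma kern_pos gamma x y : 0 < kern gamma x y.
Proof. apply exp_pos. Qed.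

Lemma phi_le1 alpha beta m j x : alpha < beta -> (1 <= m)%nat ->
  phi alpha beta m j x <= 1.
Proof.
  intros Hab Hm.
  assert (Hh : 0 < (beta - alpha) / INR m)
    by (apply Rdiv_lt_0_compat; [lra | apply lt_0_INR; lia]).
  unfold phi, phi_int, phi_mid; set (h := (beta - alpha) / INR m) in *.
  (* On its support each basis function is t (2t - 1) or 4 t (1 - t) in a
     local coordinate t in [0, 1]. *)
  assert (Hrise : forall t, 0 <= t <= 1 -> t * (2 * t - 1) <= 1) by (intros; nra).
  assert (Hbump : forall t, 4 * t * (1 - t) <= 1)
    by (intros t; pose proof (pow2_ge_0 (2 * t - 1)); nra).
  assert (Hunit : forall p, 0 <= p <= h -> 0 <= p / h <= 1).
  { intros p Hp; split.
    - apply Rmult_le_pos; [lra | left; apply Rinv_0_lt_compat; lra].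
    - apply (Rmult_le_reg_r h); [lra|]. field_simplify; lra. }
  destruct (Nat.even j).
  - set (xl := alpha + INR (Nat.div2 j) * h).
    repeat match goal with |- context [Rle_dec ?p ?q] => destruct (Rle_dec p q) end;
      try lra.
    + replace ((x - (xl - h)) / h * ((2 * x - (xl + (xl - h))) / h))
        with ((x - (xl - h)) / h * (2 * ((x - (xl - h)) / h) - 1)) by (field; lra).
      apply Hrise, Hunit; lra.
    + replace ((xl + h - x) / h * ((xl + h + xl - 2 * x) / h))
        with ((xl + h - x) / h * (2 * ((xl + h - x) / h) - 1)) by (field; lra).
      apply Hrise, Hunit; lra.
  - set (xl := alpha + INR (Nat.div2 (S j)) * h).
    repeat match goal with |- context [Rle_dec ?p ?q] => destruct (Rle_dec p q) end;
      try lra.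
    replace (4 * (x - (xl - h)) * (xl - x) / (h * h))
      with (4 * ((x - (xl - h)) / h) * (1 - (x - (xl - h)) / h)) by (field; lra).
    apply Hbump.
Qed.

Lemma RInt_is_le f g a b u v : a <= b -> (forall x, f x <= g x) ->
  RInt_is f a b u -> RInt_is g a b v -> u <= v.
Proof.
  intros Hab Hfg [pf <-] [pg <-]. apply RiemannInt_P19; auto.
Qed.

Lemma improper_int_le f g a b c u v : (forall x, f x <= g x) ->
  improper_int_at f a b c u -> improper_int_at g a b c v -> u <= v.
Proof.
  intros Hfg [_ Hf] [_ Hg].
  destruct (Rle_dec u v) as [|Hvu]; [assumption|exfalso].
  set (eps := (u - v) / 2).
  assert (Heps : 0 < eps) by (unfold eps; lra).
  destruct (Hf eps Heps) as [df [Hdf Hf']].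
  destruct (Hg eps Heps) as [dg [Hdg Hg']].
  set (h := Rmin df dg / 2).
  assert (0 < Rmin df dg) by (apply Rmin_glb_lt; lra).
  assert (Hhf : 0 < h < df) by (unfold h; pose proof (Rmin_l df dg); lra).
  assert (Hhg : 0 < h < dg) by (unfold h; pose proof (Rmin_r df dg); lra).
  destruct (Hf' h Hhf) as [u1 [u2 [Hu1 [Hu2 Hu]]]].
  destruct (Hg' h Hhg) as [v1 [v2 [Hv1 [Hv2 Hv]]]].
  assert (u1 <= v1) by exact (RInt_is_le _ _ _ _ _ _ (Rmax_l _ _) Hfg Hu1 Hv1).
  assert (u2 <= v2) by exact (RInt_is_le _ _ _ _ _ _ (Rmin_l _ _) Hfg Hu2 Hv2).
  apply Rabs_def2 in Hu. apply Rabs_def2 in Hv. unfold eps in *. lra.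
Qed.

Lemma Gmat_diag_le_Dvec gamma alpha beta m dv G i : alpha < beta -> (1 <= m)%nat ->
  is_Dvec gamma alpha beta m dv -> is_Gmat gamma alpha beta m G ->
  (1 <= i <= 2 * m - 1)%nat -> G i i <= dv i.
Proof.
  intros Hab Hm Hd HG Hi.
  refine (improper_int_le _ _ _ _ _ _ _ _ (HG i i Hi Hi) (Hd i Hi)).
  intros x; cbv beta.
  pose proof (phi_le1 alpha beta m i x Hab Hm).
  pose proof (kern_pos gamma (node alpha beta m i) x). nra.
Qed.

Lemma sdd_rowsum_lt n dv G i : sdd_rows n (fun i k => diagm dv i k - G i k) ->
  (forall k, (1 <= k <= n)%nat -> 0 < G i k) -> (1 <= i <= n)%nat ->
  G i i <= dv i -> sumR n (G i) < dv i.
Proof.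
  intros Hsdd HG Hi Hgd.
  specialize (Hsdd i Hi); cbv beta in Hsdd.
  unfold diagm at 2 in Hsdd. rewrite Nat.eqb_refl, Rabs_right in Hsdd by lra.
  assert (Hoff : forall k, (1 <= k <= n)%nat ->
    (if Nat.eqb k i then 0 else Rabs (diagm dv i k - G i k))
    = (if Nat.eqb k i then 0 else G i k)).
  { intros k Hk; unfold diagm.
    destruct (Nat.eqb_spec k i), (Nat.eqb_spec i k); try lia; [reflexivity|].
    specialize (HG k Hk); rewrite Rabs_left; lra. }
  rewrite (sumR_ext n _ _ Hoff), sumR_drop in Hsdd by exact Hi.
  lra.
Qed.

Lemma Atimes_offdiag_rowsum nx ny dx Gx dy Gy i j :
  (1 <= i <= nx)%nat -> (1 <= j <= ny)%nat ->
  (forall k, (1 <= k <= nx)%nat -> 0 < Gx i k) ->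
  (forall l, (1 <= l <= ny)%nat -> 0 < Gy j l) ->
  sumR nx (fun k => sumR ny (fun l =>
    if andb (Nat.eqb k i) (Nat.eqb l j) then 0
    else Rabs (Atimes dx Gx dy Gy (i, j) (k, l))))
  = sumR nx (Gx i) * sumR ny (Gy j) - Gx i i * Gy j j.
Proof.
  intros Hi Hj HGx HGy.
  rewrite <- sumR_mul, <- (sumR2_drop nx ny i j (fun k l => Gx i k * Gy j l)) by assumption.
  apply sumR_ext; intros k Hk; apply sumR_ext; intros l Hl.
  unfold Atimes, kron, diagm; simpl.
  pose proof (HGx k Hk); pose proof (HGy l Hl).
  destruct (Nat.eqb_spec k i), (Nat.eqb_spec l j), (Nat.eqb_spec i k),
    (Nat.eqb_spec j l); try lia; simpl; try reflexivity;
    rewrite Rabs_left; nra.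
Qed.

Theorem lemma3p8
  (gamma a b c d : R) (Mx My : nat)
  (dx : nat -> R) (Gx : nat -> nat -> R)
  (dy : nat -> R) (Gy : nat -> nat -> R)
  (Hgamma : 0 < gamma < 1) (Hab : a < b) (Hcd : c < d)
  (HMx : (2 <= Mx)%nat) (HMy : (2 <= My)%nat)
  (Hdx : is_Dvec gamma a b Mx dx) (HGx : is_Gmat gamma a b Mx Gx)
  (Hdy : is_Dvec gamma c d My dy) (HGy : is_Gmat gamma c d My Gy)
  (HGxpos : forall i j, (1 <= i <= 2 * Mx - 1)%nat -> (1 <= j <= 2 * Mx - 1)%nat ->
              0 < Gx i j)
  (HGypos : forall i j, (1 <= i <= 2 * My - 1)%nat -> (1 <= j <= 2 * My - 1)%nat ->
              0 < Gy i j)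
  (HsddX : sdd_rows (2 * Mx - 1) (fun i k => diagm dx i k - Gx i k))
  (HsddY : sdd_rows (2 * My - 1) (fun i k => diagm dy i k - Gy i k)) :
  sdd_rows2 (2 * Mx - 1) (2 * My - 1) (Atimes dx Gx dy Gy).
Proof.
  intros i j Hi Hj.
  pose proof (Gmat_diag_le_Dvec gamma a b Mx _ _ i Hab ltac:(lia) Hdx HGx Hi) as Hgdx.
  pose proof (Gmat_diag_le_Dvec gamma c d My _ _ j Hcd ltac:(lia) Hdy HGy Hj) as Hgdy.
  pose proof (sdd_rowsum_lt _ _ _ i HsddX (fun k => HGxpos i k Hi) Hi Hgdx) as HSx.
  pose proof (sdd_rowsum_lt _ _ _ j HsddY (fun l => HGypos j l Hj) Hj Hgdy) as HSy.
  pose proof (sumR_ge_term _ i (Gx i) (fun k Hk => Rlt_le _ _ (HGxpos i k Hi Hk)) Hi).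
  pose proof (sumR_ge_term _ j (Gy j) (fun l Hl => Rlt_le _ _ (HGypos j l Hj Hl)) Hj).
  pose proof (HGxpos i i Hi Hi); pose proof (HGypos j j Hj Hj).
  rewrite Atimes_offdiag_rowsum by auto.
  unfold Atimes, kron, diagm; cbn [fst snd]; rewrite !Nat.eqb_refl.
  rewrite Rabs_right by nra. nra.
Qed.
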